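(* Let $A$ be a commutative ring with at least $4$ elements, and let $\tilde{\mathcal P}(A)=\mathrm{coker}(\delta:\mathbb Z[X_5]\to\mathbb Z[X_4])$, a right $\mathrm{GL}_2(A)$-module. Then $\mathcal{RP}(A)\cong\tilde{\mathcal P}(A)_{\mathrm{SL}_2(A)}$ as $\mathcal R_A$-modules, and $\mathcal P(A)\cong\tilde{\mathcal P}(A)_{\mathrm{GL}_2(A)}$ as abelian groups. Explicitly, the class of $(\bar{\mathbf u}_1,\ldots,\bar{\mathbf u}_4)$ corresponds to $\left\langle\frac{d(\mathbf u_1,\mathbf u_3)d(\mathbf u_1,\mathbf u_2)}{d(\mathbf u_2,\mathbf u_3)}\right\rangle\left[\frac{d(\mathbf u_1,\mathbf u_4)d(\mathbf u_2,\mathbf u_3)}{d(\mathbf u_2,\mathbf u_4)d(\mathbf u_1,\mathbf u_3)}\right]$, where $d(\mathbf u,\mathbf v)$ is the determinant of the matrix with rows $\mathbf u,\mathbf v$.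
   Context: For a commutative ring $A$: $A^\times$ units; $G_A=A^\times/(A^\times)^2$ with classes $\langle x\rangle$; $\mathcal R_A=\mathbb Z[G_A]$; $W_A=\{u\in A^\times:1-u\in A^\times\}$. $\mathcal{RP}(A)$ is the $\mathcal R_A$-module generated by $[x]$, $x\in W_A$, with relations $[x]-[y]+\langle x\rangle[y/x]-\langle x^{-1}-1\rangle\left[\frac{1-x^{-1}}{1-y^{-1}}\right]+\langle 1-x\rangle\left[\frac{1-x}{1-y}\right]=0$ for $x,y,y/x\in W_A$; $\mathcal P(A)$ is the abelian group with the same generators and relations with all $\langle\cdot\rangle$ replaced by $1$. $U_2$ is the set of unimodular rows in $A^2$; $\tilde X_n\subset U_2^n$ consists of tuples with any two rows forming an invertible matrix; $X_n=\tilde X_n/(A^\times)^n$, with $\mathrm{GL}_2(A)$ acting on the right diagonally; $\delta$ is the simplicial boundary $\delta(\bar{\mathbf u}_1,\ldots,\bar{\mathbf u}_{n+1})=\sum_i(-1)^{i+1}(\ldots,\widehat{\bar{\mathbf u}_i},\ldots)$. The coinvariants $\tilde{\mathcal P}(A)_{\mathrm{SL}_2(A)}$ are an $\mathcal R_A$-module with $\langle a\rangle$ acting via any matrix of determinant $a$. *)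

From HB Require Import structures.
From mathcomp Require Import all_boot all_order all_algebra.
Set Implicit Arguments. Unset Strict Implicit. Unset Printing Implicit Defensive.
Import Order.TTheory GRing.Theory Num.Theory.
Local Open Scope ring_scope.

(* Formal expressions in the generators G (elements of Z[G] up to the
   abelian-group axioms, which are imposed by [pres_eq]). *)
Inductive fterm (G : Type) : Type :=
  | FGen of G
  | FZero
  | FAdd of fterm G & fterm G
  | FNeg of fterm G.
Arguments FZero {G}.

Definition FSub {G} (s t : fterm G) := FAdd s (FNeg t).

Definition fsum {G} (l : seq (fterm G)) : fterm G := foldr (@FAdd G) FZero l.

(* pres_eq R s t : s = t in the abelian group <G | R>, i.e. the quotient of
   the free abelian group Z[G] by the subgroup generated by R. *)
Inductive pres_eq {G : Type} (R : fterm G -> Prop) : fterm G -> fterm G -> Prop :=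
  | pe_refl t : pres_eq R t t
  | pe_sym s t : pres_eq R s t -> pres_eq R t s
  | pe_trans s t u : pres_eq R s t -> pres_eq R t u -> pres_eq R s u
  | pe_add s s' t t' : pres_eq R s s' -> pres_eq R t t' ->
                       pres_eq R (FAdd s t) (FAdd s' t')
  | pe_neg s s' : pres_eq R s s' -> pres_eq R (FNeg s) (FNeg s')
  | pe_assoc s t u : pres_eq R (FAdd s (FAdd t u)) (FAdd (FAdd s t) u)
  | pe_comm s t : pres_eq R (FAdd s t) (FAdd t s)
  | pe_zero s : pres_eq R (FAdd FZero s) s
  | pe_negl s : pres_eq R (FAdd (FNeg s) s) FZero
  | pe_rel s : R s -> pres_eq R s FZero.

Fixpoint fmap {G H : Type} (phi : G -> fterm H) (t : fterm G) : fterm H :=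
  match t with
  | FGen g => phi g
  | FZero => FZero
  | FAdd s u => FAdd (fmap phi s) (fmap phi u)
  | FNeg s => FNeg (fmap phi s)
  end.

Section Bloch.
Variable A : comUnitRingType.

Definition inW (x : A) : bool := (x \is a GRing.unit) && (1 - x \is a GRing.unit).

(* Generators of RP(A) as an abelian group: <a>[x] with a in A^x, x in W_A. *)
Definition RPgen := {p : A * A | (p.1 \is a GRing.unit) && inW p.2}.

(* <a>[x] when a is a unit and x in W_A, and 0 otherwise (the latter case
   never occurs in the uses below). *)
Definition rpgen (a x : A) : fterm RPgen :=
  match @insub _ (fun p : A * A => (p.1 \is a GRing.unit) && inW p.2) RPgen (a, x) with
  | Some p => FGen p
  | None => FZero
  end.

(* Relations of RP(A) as an abelian group: <a> only depends on the square
   class of a, and all R_A-multiples <g>.(five-term relation). *)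
Inductive RP_rel : fterm RPgen -> Prop :=
  | rp_sq a w x : a \is a GRing.unit -> w \is a GRing.unit -> inW x ->
      RP_rel (FSub (rpgen a x) (rpgen (a * w ^+ 2) x))
  | rp_five g x y : g \is a GRing.unit -> inW x -> inW y -> inW (y / x) ->
      RP_rel (fsum [:: rpgen g x; FNeg (rpgen g y); rpgen (g * x) (y / x);
                       FNeg (rpgen (g * (x^-1 - 1)) ((1 - x^-1) / (1 - y^-1)));
                       rpgen (g * (1 - x)) ((1 - x) / (1 - y))]).

(* Action of <a> in R_A on RP(A). *)
Definition ract (a : A) : fterm RPgen -> fterm RPgen :=
  fmap (fun p : RPgen => rpgen (a * (val p).1) (val p).2).

Definition Pgen := {x : A | inW x}.

Definition pgen (x : A) : fterm Pgen :=
  match @insub _ inW Pgen x with Some p => FGen p | None => FZero end.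

Inductive P_rel : fterm Pgen -> Prop :=
  | p_five x y : inW x -> inW y -> inW (y / x) ->
      P_rel (fsum [:: pgen x; FNeg (pgen y); pgen (y / x);
                      FNeg (pgen ((1 - x^-1) / (1 - y^-1)));
                      pgen ((1 - x) / (1 - y))]).

Definition row2 := 'rV[A]_2.

Definition dd (u v : row2) : A := \det (col_mx u v : 'M[A]_2).

Definition unimodular (u : row2) : Prop := exists c : 'cV[A]_2, u *m c = 1%:M.

Definition Xt (n : nat) :=
  {f : 'I_n -> row2 | (forall i, unimodular (f i)) /\
                      (forall i j, i != j -> (col_mx (f i) (f j) : 'M[A]_2) \in unitmx)}.

(* Relations defining tilde P(A)_H as a quotient of Z[tilde X_4]:
   - passage from tilde X_4 to X_4 (rescaling each row by a unit),
   - the image of delta : Z[X_5] -> Z[X_4],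
   - coinvariants: x - x.M for M in the group H (given as a predicate). *)
Inductive Pt_rel (H : 'M[A]_2 -> Prop) : fterm (Xt 4) -> Prop :=
  | pt_scale (f g : Xt 4) :
      (forall i, exists l : A, l \is a GRing.unit /\ sval g i = l *: sval f i) ->
      Pt_rel H (FSub (FGen f) (FGen g))
  | pt_delta (F : Xt 5) (G : 'I_5 -> Xt 4) :
      (forall i : 'I_5, forall k : 'I_4, sval (G i) k = sval F (lift i k)) ->
      Pt_rel H (fsum [seq (if odd i then FNeg (FGen (G i)) else FGen (G i))
                     | i : 'I_5 <- enum 'I_5])
  | pt_act (f g : Xt 4) (M : 'M[A]_2) : H M ->
      (forall i, sval g i = sval f i *m M) ->
      Pt_rel H (FSub (FGen f) (FGen g)).

Definition SL2 (M : 'M[A]_2) : Prop := \det M = 1.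
Definition GL2 (M : 'M[A]_2) : Prop := M \in unitmx.

Definition i0 : 'I_4 := inord 0.
Definition i1 : 'I_4 := inord 1.
Definition i2 : 'I_4 := inord 2.
Definition i3 : 'I_4 := inord 3.

(* The explicit maps on generators (u_1,...,u_4) = (u i0, ..., u i3). *)
Definition phiRP (f : Xt 4) : fterm RPgen :=
  let u := sval f in
  rpgen (dd (u i0) (u i2) * dd (u i0) (u i1) / dd (u i1) (u i2))
        (dd (u i0) (u i3) * dd (u i1) (u i2) / (dd (u i1) (u i3) * dd (u i0) (u i2))).

Definition phiP (f : Xt 4) : fterm Pgen :=
  let u := sval f in
  pgen (dd (u i0) (u i3) * dd (u i1) (u i2) / (dd (u i1) (u i3) * dd (u i0) (u i2))).

End Bloch.

(* A configuration (u_0,...,u_3) of rows of A^2 in general position has two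
   invariants: the prefactor p = d02 d01 / d12 and the cross ratio
   c = d03 d12 / (d13 d02), where d_ij = d(u_i, u_j); phi sends it to <p>[c].
   Rescaling the rows and acting by a matrix M multiplies p by a square times
   det M and fixes c.  Conversely an SL_2-matrix built from u_0, u_1, followed
   by rescalings, moves any configuration to the normal form
   (1,0), (0,-t_2), (1,-t_2), (1,-t_3), ..., which for four points is the
   standard configuration std(p, c).
   The GL_2 / P(A) case is the same argument forgetting p, which GL_2 can
   change arbitrarily. *)

From HB Require Import structures.
From mathcomp Require Import all_boot all_order all_algebra.
From mathcomp Require Import ring.
Set Implicit Arguments. Unset Strict Implicit. Unset Printing Implicit Defensive.
Import GRing.Theory.
Local Open Scope ring_scope.

Section Presentations.
Variables (G : Type) (R : fterm G -> Prop).
Local Notation "s ~~ t" := (pres_eq R s t) (at level 70).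

Lemma pe_addr0 s : FAdd s FZero ~~ s.
Proof. exact: pe_trans (pe_comm _ _ _) (pe_zero _ _). Qed.

Lemma pe_addl s s' t : s ~~ s' -> FAdd s t ~~ FAdd s' t.
Proof. by move=> h; apply: pe_add => //; apply: pe_refl. Qed.

Lemma pe_addr s t t' : t ~~ t' -> FAdd s t ~~ FAdd s t'.
Proof. by move=> h; apply: pe_add => //; apply: pe_refl. Qed.

Lemma pe_sub0 s t : FSub s t ~~ FZero -> s ~~ t.
Proof.
move=> h; apply: pe_trans (pe_sym (pe_addr0 s)) _.
apply: pe_trans (pe_addr s (pe_sym (pe_negl R t))) _.
apply: pe_trans (pe_assoc _ _ _ _) _.
exact: pe_trans (pe_addl t h) (pe_zero _ _).
Qed.

Lemma pe_subr s t : s ~~ t -> FSub s t ~~ FZero.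
Proof.
move=> h; apply: pe_trans (pe_addl _ h) _.
exact: pe_trans (pe_comm _ _ _) (pe_negl _ _).
Qed.

Lemma pe_fsum_rcons l x : fsum (rcons l x) ~~ FAdd x (fsum l).
Proof.
elim: l => [|y l IH] /=; first exact: pe_refl.
apply: pe_trans (pe_addr y IH) _.
apply: pe_trans (pe_assoc _ _ _ _) _.
exact: pe_trans (pe_addl _ (pe_comm _ _ _)) (pe_sym (pe_assoc _ _ _ _)).
Qed.

Lemma pe_fsum_rev l : fsum (rev l) ~~ fsum l.
Proof.
elim: l => [|x l IH]; first exact: pe_refl.
by rewrite rev_cons; apply: pe_trans (pe_fsum_rcons _ _) _; apply: pe_addr.
Qed.

Definition signed (b : bool) (t : fterm G) : fterm G := if b then FNeg t else t.

Lemma pe_fsum_signed (I : Type) (b : I -> bool) (s t : I -> fterm G) (l : seq I) :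
  (forall i, s i ~~ t i) ->
  fsum [seq signed (b i) (s i) | i <- l] ~~ fsum [seq signed (b i) (t i) | i <- l].
Proof.
move=> h; elim: l => [|i l IH] /=; first exact: pe_refl.
by apply: pe_add => //; case: (b i) => /=; [apply: pe_neg|]; apply: h.
Qed.

End Presentations.

Lemma pe_mono G (R R' : fterm G -> Prop) :
  (forall r, R r -> R' r) -> forall s t, pres_eq R s t -> pres_eq R' s t.
Proof.
move=> hR s t; elim; by [constructor | move=> *; econstructor; eauto].
Qed.

Lemma pe_hom G H (R : fterm G -> Prop) (R' : fterm H -> Prop) (phi : G -> fterm H) :
  (forall r, R r -> pres_eq R' (fmap phi r) FZero) ->
  forall s t, pres_eq R s t -> pres_eq R' (fmap phi s) (fmap phi t).
Proof.
move=> hR s t; elim => /=; by [constructor | move=> *; econstructor; eauto | apply: hR].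
Qed.

Lemma fmap_comp G H K (phi : G -> fterm H) (psi : H -> fterm K) s :
  fmap psi (fmap phi s) = fmap (fun g => fmap psi (phi g)) s.
Proof. by elim: s => //= [s -> t -> | s ->]. Qed.

Lemma fmap_fsum G H (phi : G -> fterm H) l : fmap phi (fsum l) = fsum (map (fmap phi) l).
Proof. by elim: l => //= x l ->. Qed.

Lemma fmap_signed G H (phi : G -> fterm H) b t :
  fmap phi (signed b t) = signed b (fmap phi t).
Proof. by case: b. Qed.

Lemma pres_inj_of_retraction G H (R : fterm G -> Prop) (R' : fterm H -> Prop)
    (phi : G -> fterm H) (psi : H -> fterm G) :
  (forall r, R' r -> pres_eq R (fmap psi r) FZero) ->
  (forall g, pres_eq R (fmap psi (phi g)) (FGen g)) ->
  forall s t, pres_eq R' (fmap phi s) (fmap phi t) -> pres_eq R s t.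
Proof.
move=> hpsi hret.
have id_on s : pres_eq R (fmap psi (fmap phi s)) s.
  rewrite fmap_comp; elim: s => [g||s IHs t IHt|s IHs] /=;
  by [apply: hret | apply: pe_refl | apply: pe_add | apply: pe_neg].
move=> s t /(pe_hom hpsi) h.
exact: pe_trans (pe_sym (id_on s)) (pe_trans h (id_on t)).
Qed.

Lemma pres_surj G H (R' : fterm H -> Prop) (phi : G -> fterm H) :
  (forall h, exists s, pres_eq R' (fmap phi s) (FGen h)) ->
  forall r, exists s, pres_eq R' (fmap phi s) r.
Proof.
move=> hgen; elim=> [h||s [s' hs] t [t' ht]|s [s' hs]].
- exact: hgen.
- by exists FZero; apply: pe_refl.
- by exists (FAdd s' t'); apply: pe_add.
- by exists (FNeg s'); apply: pe_neg.
Qed.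

Section Rows.
Variable A : comUnitRingType.
Implicit Types u v : row2 A.

Lemma det2 (M : 'M[A]_2) : \det M = M 0 0 * M 1 1 - M 0 1 * M 1 0.
Proof.
rewrite (expand_det_row _ 0) !big_ord_recl big_ord0 /cofactor !det_mx11 !mxE /=.
rewrite !expr0 !expr1 addr0 !mul1r mulN1r mulrN.
by congr (_ * M _ _ - M _ _ * M _ _); apply/val_inj.
Qed.

Definition mkr (a b : A) : row2 A := \row_(j < 2) (if val j == 0%N then a else b).

Lemma mkr0 a b : mkr a b 0 0 = a. Proof. by rewrite mxE. Qed.
Lemma mkr1 a b : mkr a b 0 1 = b. Proof. by rewrite mxE. Qed.

Lemma row_mkr u : u = mkr (u 0 0) (u 0 1).
Proof.
apply/rowP => j; rewrite mxE.
by case: j => [[|[|]]] //= ?; congr (u 0 _); apply/val_inj.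
Qed.

Lemma mkr_eq a b c d : a = c -> b = d -> mkr a b = mkr c d.
Proof. by move=> -> ->. Qed.

Lemma ddE u v : dd u v = u 0 0 * v 0 1 - u 0 1 * v 0 0.
Proof.
have e0 j : (col_mx u v : 'M[A]_2) 0 j = u 0 j.
  by rewrite (_ : 0 = @lshift 1 1 0); [exact: col_mxEu | exact/val_inj].
have e1 j : (col_mx u v : 'M[A]_2) 1 j = v 0 j.
  by rewrite (_ : 1 = @rshift 1 1 0); [exact: col_mxEd | exact/val_inj].
by rewrite /dd det2 !e0 !e1.
Qed.

Lemma ddmk a b c d : dd (mkr a b) (mkr c d) = a * d - b * c.
Proof. by rewrite ddE !mkr0 !mkr1. Qed.

Lemma scaleE l u j : (l *: u) 0 j = l * u 0 j. Proof. by rewrite mxE. Qed.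

Lemma scale_mkr (l p q : A) : l *: mkr p q = mkr (l * p) (l * q).
Proof. by rewrite [LHS]row_mkr !scaleE !mkr0 !mkr1. Qed.

Lemma mulmxE u (M : 'M[A]_2) j : (u *m M) 0 j = u 0 0 * M 0 j + u 0 1 * M 1 j.
Proof.
rewrite mxE !big_ord_recl big_ord0 addr0.
by congr (_ + u 0 _ * M _ j); apply/val_inj.
Qed.

Lemma ddZ l m u v : dd (l *: u) (m *: v) = l * m * dd u v.
Proof. rewrite !ddE !scaleE; ring. Qed.

Lemma ddM u v (M : 'M[A]_2) : dd (u *m M) (v *m M) = dd u v * \det M.
Proof. by rewrite /dd -mul_col_mx det_mulmx. Qed.

Lemma ddC u v : dd v u = - dd u v.
Proof. rewrite !ddE; ring. Qed.

Lemma plucker u0 u1 u2 u3 :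
  dd u0 u2 * dd u1 u3 - dd u0 u3 * dd u1 u2 = dd u0 u1 * dd u2 u3.
Proof. rewrite !ddE; ring. Qed.

Definition dmx (s t : A) : 'M[A]_2 :=
  \matrix_(i < 2, j < 2) (if val i == val j then (if val i == 0%N then s else t) else 0).

Lemma mkr_dmx (p q s t : A) : mkr p q *m dmx s t = mkr (p * s) (q * t).
Proof. by rewrite [LHS]row_mkr !mulmxE !mxE /= !mulr0 ?addr0 ?add0r. Qed.

Lemma det_dmx s t : \det (dmx s t) = s * t.
Proof. by rewrite det2 !mxE /= mulr0 subr0. Qed.

End Rows.

Section Configurations.
Variable A : comUnitRingType.
Implicit Types u v : row2 A.

Definition generic n (h : 'I_n -> row2 A) :=
  forall i j, i != j -> dd (h i) (h j) \is a GRing.unit.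

Lemma generic_lt n (h : 'I_n -> row2 A) :
  (forall i j : 'I_n, (i < j)%N -> dd (h i) (h j) \is a GRing.unit) -> generic h.
Proof.
move=> H i j; rewrite neq_ltn => /orP [] hij; first exact: H.
by rewrite ddC unitrN; apply: H.
Qed.

Lemma generic_ext n (h h' : 'I_n -> row2 A) :
  (forall k, h k = h' k) -> generic h -> generic h'.
Proof. by move=> e hg i j hij; rewrite -!e; apply: hg. Qed.

Lemma generic_transform n (h h' : 'I_n -> row2 A) (l : 'I_n -> A) (M : 'M[A]_2) :
  generic h -> (forall k, l k \is a GRing.unit) -> \det M \is a GRing.unit ->
  (forall k, h' k = l k *: (h k *m M)) -> generic h'.
Proof.
move=> hg hl hM e i j hij; rewrite !e ddZ ddM !unitrM hM !hl /=.
by rewrite andbT; apply: hg.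
Qed.

Lemma generic_lift n (h : 'I_n.+1 -> row2 A) (i : 'I_n.+1) :
  generic h -> generic (fun k : 'I_n => h (lift i k)).
Proof. by move=> hg j k hjk; apply: hg; rewrite (inj_eq (@lift_inj _ i)). Qed.

Lemma unimodular_of_dd u v : dd u v \is a GRing.unit -> unimodular u.
Proof.
move=> hu; exists ((dd u v)^-1 *: \col_(i < 2) (if val i == 0%N then v 0 1 else - v 0 0)).
apply/matrixP => i j; rewrite [i]ord1 [j]ord1 !mxE !big_ord_recl big_ord0 !mxE /=.
have e := ddE u v; rewrite -(mulVr hu); move: (dd u v)^-1 => di.
rewrite e (_ : lift ord0 ord0 = 1 :> 'I_2); last exact/val_inj.
rewrite (_ : ord0 = 0 :> 'I_2) //; ring.
Qed.

Lemma generic_Xt_proof n (h : 'I_n.+2 -> row2 A) : generic h ->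
  (forall i, unimodular (h i)) /\
  (forall i j, i != j -> (col_mx (h i) (h j) : 'M[A]_2) \in unitmx).
Proof.
move=> hg; split; last by move=> i j hij; rewrite unitmxE; apply: hg.
move=> i; pose j : 'I_n.+2 := if i == ord0 then lift ord0 ord0 else ord0.
apply: (@unimodular_of_dd _ (h j)); apply: hg.
by rewrite /j; case: (i =P ord0) => [->|/eqP].
Qed.

Definition mkX n (h : 'I_n.+2 -> row2 A) (hg : generic h) : Xt A n.+2 :=
  exist _ h (generic_Xt_proof hg).

Lemma genericX n (f : Xt A n) : generic (sval f).
Proof. by move=> i j hij; rewrite -unitmxE; apply: (proj2 (svalP f)). Qed.

Lemma Pt_transform (H : 'M[A]_2 -> Prop) (f g : Xt A 4) (M : 'M[A]_2) (l : 'I_4 -> A) :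
  H M -> \det M \is a GRing.unit -> (forall k, l k \is a GRing.unit) ->
  (forall k, sval g k = l k *: (sval f k *m M)) ->
  pres_eq (Pt_rel H) (FGen f) (FGen g).
Proof.
move=> HM hM hl e.
have hg : generic (fun k => sval f k *m M).
  apply: (@generic_transform _ (sval f) _ (fun=> 1) M (genericX f)) => // k;
  by rewrite ?unitr1 ?scale1r.
apply: (@pe_trans _ _ _ (FGen (mkX hg))).
- by apply: pe_sub0; apply: pe_rel; apply: (@pt_act _ _ f _ M).
- apply: pe_sub0; apply: pe_rel; apply: pt_scale => k.
  by exists (l k); split => //; rewrite e.
Qed.

Lemma Pt_ext (H : 'M[A]_2 -> Prop) (f g : Xt A 4) :
  (forall k, sval g k = sval f k) -> pres_eq (Pt_rel H) (FGen f) (FGen g).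
Proof.
move=> e; apply: pe_sub0; apply: pe_rel; apply: pt_scale => k.
by exists 1; rewrite unitr1 scale1r e.
Qed.

Lemma SL2_GL2 s t : pres_eq (Pt_rel (@SL2 A)) s t -> pres_eq (Pt_rel (@GL2 A)) s t.
Proof.
apply: pe_mono => r [f g hfg|F G hFG|f g M hM e].
- exact: pt_scale.
- exact: pt_delta.
- by apply: (pt_act (M := M)) => //; rewrite /GL2 unitmxE hM unitr1.
Qed.

End Configurations.

(* Normal form: using the first two rows, an SL_2-matrix and rescalings send a
   generic configuration of n+3 rows to
     (1,0), (0,-t_2), (1,-t_2), (1,-t_3), ...,  t_k = d01 d0k / d1k. *)
Section NormalForm.
Variable A : comUnitRingType.
Variable n : nat.
Variable h : 'I_n.+3 -> row2 A.
Hypothesis hg : generic h.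

Local Notation o k := (@inord n.+2 k).
Local Notation D j k := (dd (h j) (h k)).
Local Notation d01 := (D (o 0) (o 1)).

Lemma val_o k : (k < 3)%N -> val (o k) = k.
Proof. by move=> hk; apply: inordK; apply: leq_trans hk _. Qed.

Lemma o_neq j k : (j < 3)%N -> (k < 3)%N -> j != k -> o j != o k.
Proof.
by move=> hj hk; apply: contra => /eqP /(f_equal val); rewrite !val_o // => ->.
Qed.

Lemma unit_dd j k : j != k -> D j k \is a GRing.unit.
Proof. exact: hg. Qed.

Lemma unit_d01 : d01 \is a GRing.unit.
Proof. by apply: unit_dd; apply: o_neq. Qed.

(* The determinant-one matrix sending u_0 to (1, 0) and u_1 to (0, d01). *)
Definition normMx : 'M[A]_2 := \matrix_(i < 2, j < 2)
  (if val i == 0%N then (if val j == 0%N then h (o 1) 0 1 / d01 else - h (o 0) 0 1)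
   else (if val j == 0%N then - h (o 1) 0 0 / d01 else h (o 0) 0 0)).

Lemma normMx_col0 k : (h k *m normMx) 0 0 = - D (o 1) k / d01.
Proof. rewrite mulmxE !mxE /=; move: (d01^-1) => di; rewrite (ddE (h (o 1))); ring. Qed.

Lemma normMx_col1 k : (h k *m normMx) 0 1 = D (o 0) k.
Proof. rewrite mulmxE !mxE /= ddE; ring. Qed.

Lemma det_normMx : \det normMx = 1.
Proof.
rewrite det2 !mxE /= -(mulrV unit_d01); move: (d01^-1) => di.
rewrite (ddE (h (o 0)) (h (o 1))); ring.
Qed.

Definition normT k := d01 * D (o 0) k / D (o 1) k.

Definition normRow k :=
  if val k == 0%N then mkr 1 0 else if val k == 1%N then mkr 0 (- normT (o 2))
  else mkr 1 (- normT k).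

Definition normScale k :=
  if val k == 0%N then 1 else if val k == 1%N then - normT (o 2) / d01
  else - d01 / D (o 1) k.

Lemma unit_normT k : k != o 0 -> k != o 1 -> normT k \is a GRing.unit.
Proof. by move=> h0 h1; rewrite /normT !unitrM unitrV unit_d01 !unit_dd // eq_sym. Qed.

Lemma unit_normScale k : normScale k \is a GRing.unit.
Proof.
rewrite /normScale; case: eqP => [_|/eqP k0]; first exact: unitr1.
have kn0 : k != o 0 by apply: contra k0 => /eqP ->; rewrite val_o.
case: eqP => [_|/eqP k1].
  by rewrite unitrM unitrN unitrV unit_d01 andbT unit_normT // o_neq.
have kn1 : k != o 1 by apply: contra k1 => /eqP ->; rewrite val_o.
by rewrite unitrM unitrN unitrV unit_d01 unit_dd // eq_sym.
Qed.

Lemma normRowE k : normRow k = normScale k *: (h k *m normMx).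
Proof.
rewrite [RHS]row_mkr !scaleE normMx_col0 normMx_col1 /normRow /normScale.
case: eqP => [k0|/eqP k0].
  have -> : k = o 0 by apply/val_inj; rewrite val_o.
  apply: mkr_eq; last by rewrite ddE; ring.
  by rewrite ddC opprK mul1r mulrV // unit_d01.
have kn0 : k != o 0 by apply: contra k0 => /eqP ->; rewrite val_o.
case: eqP => [k1|/eqP k1].
  have -> : k = o 1 by apply/val_inj; rewrite val_o.
  apply: mkr_eq; first by rewrite (ddE (h (o 1)) (h (o 1))); ring.
  by rewrite divrK // unit_d01.
have kn1 : k != o 1 by apply: contra k1 => /eqP ->; rewrite val_o.
apply: mkr_eq; last by rewrite /normT; ring.
have u1 : D (o 1) k \is a GRing.unit by apply: unit_dd; rewrite eq_sym.
rewrite -[LHS](mulr1) -{1}(mulrV unit_d01) -(mulrV u1).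
move: (d01^-1) (D (o 1) k)^-1 => di ei; ring.
Qed.

Lemma generic_normRow : generic normRow.
Proof.
apply: (generic_transform hg (l := normScale) (M := normMx)).
- exact: unit_normScale.
- by rewrite det_normMx unitr1.
- exact: normRowE.
Qed.

End NormalForm.

Section Invariants.
Variable A : comUnitRingType.
Implicit Types h : 'I_4 -> row2 A.

Definition pref h := dd (h i0) (h i2) * dd (h i0) (h i1) / dd (h i1) (h i2).
Definition cratio h :=
  dd (h i0) (h i3) * dd (h i1) (h i2) / (dd (h i1) (h i3) * dd (h i0) (h i2)).

Lemma phiRPE (f : Xt A 4) : phiRP f = rpgen (pref (sval f)) (cratio (sval f)).
Proof. by []. Qed.

Lemma phiPE (f : Xt A 4) : phiP f = pgen (cratio (sval f)).
Proof. by []. Qed.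

Lemma val_i0 : nat_of_ord i0 = 0%N. Proof. by rewrite inordK. Qed.
Lemma val_i1 : nat_of_ord i1 = 1%N. Proof. by rewrite inordK. Qed.
Lemma val_i2 : nat_of_ord i2 = 2%N. Proof. by rewrite inordK. Qed.
Lemma val_i3 : nat_of_ord i3 = 3%N. Proof. by rewrite inordK. Qed.

Lemma ord_inord n k (hk : (k < n.+1)%N) : Ordinal hk = inord k.
Proof. by apply/val_inj; rewrite /= inordK. Qed.

Lemma i_neq j k : (j < 4)%N -> (k < 4)%N -> j != k -> (inord j : 'I_4) != inord k.
Proof. by move=> hj hk; apply: contra => /eqP /(f_equal val) /=; rewrite !inordK // => ->. Qed.

(* The invariants of a generic configuration are admissible: p is a unit and
   c lies in W_A, since 1 - c = d01 d23 / (d13 d02) by Pluecker. *)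
Lemma invariants_mem h : generic h -> (pref h \is a GRing.unit) && inW (cratio h).
Proof.
move=> hg; have u j k : (j < 4)%N -> (k < 4)%N -> j != k ->
  dd (h (inord j)) (h (inord k)) \is a GRing.unit by move=> *; apply/hg/i_neq.
have uq : dd (h i1) (h i3) * dd (h i0) (h i2) \is a GRing.unit by rewrite unitrM !u.
have e1c : 1 - cratio h =
    dd (h i0) (h i1) * dd (h i2) (h i3) / (dd (h i1) (h i3) * dd (h i0) (h i2)).
  have pl := esym (plucker (h i0) (h i1) (h i2) (h i3)); have hq := mulrV uq.
  rewrite /cratio; move: (_^-1) hq => qi hq; rewrite pl -hq; ring.
by rewrite /inW e1c /pref /cratio !unitrM !unitrV uq !u.
Qed.

Lemma phi_mem (f : Xt A 4) : (pref (sval f) \is a GRing.unit) && inW (cratio (sval f)).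
Proof. exact/invariants_mem/genericX. Qed.

Lemma pref_transform h h' (l : 'I_4 -> A) (M : 'M[A]_2) :
  generic h -> (forall k, l k \is a GRing.unit) -> \det M \is a GRing.unit ->
  (forall k, h' k = l k *: (h k *m M)) ->
  pref h' = pref h * (l i0) ^+ 2 * \det M.
Proof.
move=> hg hl hM e; rewrite /pref !e !ddZ !ddM.
have u12 : dd (h i1) (h i2) \is a GRing.unit by apply: hg; apply: o_neq.
rewrite !invrM ?unitrM ?hl ?u12 ?hM //.
have h1 := mulrV (hl i1); have h2 := mulrV (hl i2); have h3 := mulrV hM.
move: (l i1) (l i2) (\det M) h1 h2 h3 => a b c h1 h2 h3.
ring: h1 h2 h3.
Qed.

Lemma cratio_transform h h' (l : 'I_4 -> A) (M : 'M[A]_2) :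
  generic h -> (forall k, l k \is a GRing.unit) -> \det M \is a GRing.unit ->
  (forall k, h' k = l k *: (h k *m M)) -> cratio h' = cratio h.
Proof.
move=> hg hl hM e; rewrite /cratio !e !ddZ !ddM.
have u02 : dd (h i0) (h i2) \is a GRing.unit by apply: hg; apply: o_neq.
have u13 : dd (h i1) (h i3) \is a GRing.unit by apply: hg; exact: i_neq.
rewrite !invrM ?unitrM ?hl ?u02 ?u13 ?hM //.
have h0 := mulrV (hl i0); have h1 := mulrV (hl i1); have h2 := mulrV (hl i2);
have h3 := mulrV (hl i3); have h4 := mulrV hM.
move: (l i0) (l i1) (l i2) (l i3) (\det M) h0 h1 h2 h3 h4 => a b c d m h0 h1 h2 h3 h4.
ring: h0 h1 h2 h3 h4.
Qed.

Definition stdr (a x : A) (k : 'I_4) : row2 A :=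
  nth 0 [:: mkr 1 0; mkr 0 (- a); mkr 1 (- a); mkr 1 (- (a * x))] k.

Lemma stdr_normRow h (hg : generic h) k : stdr (pref h) (cratio h) k = normRow h k.
Proof.
have u := unit_dd hg.
case: k => [[|[|[|[|m]]]] hk] //; rewrite /stdr /normRow /= ?ord_inord.
- congr (mkr 0 (- _)); rewrite /pref /normT; ring.
- congr (mkr 1 (- _)); rewrite /pref /normT; ring.
- congr (mkr 1 (- _)); rewrite /pref /cratio /normT.
  have u12 : dd (h i1) (h i2) \is a GRing.unit by apply: u; apply: o_neq.
  have u02 : dd (h i0) (h i2) \is a GRing.unit by apply: u; apply: o_neq.
  have u13 : dd (h i1) (h i3) \is a GRing.unit by apply: u; exact: i_neq.
  rewrite invrM //; have h1 := mulrV u12; have h2 := mulrV u02.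
  move: (dd (h i1) (h i2)) (dd (h i0) (h i2)) h1 h2 => a b h1 h2.
  ring: h1 h2.
Qed.

Lemma generic_stdr (a x : A) : a \is a GRing.unit -> inW x -> generic (stdr a x).
Proof.
move=> ua /andP [ux u1x]; apply: generic_lt.
case=> [[|[|[|[|m]]]] hi] // [[|[|[|[|m']]]] hj] //= _; rewrite /stdr /= ddmk.
- by rewrite mul1r mul0r subr0 unitrN.
- by rewrite mul1r mul0r subr0 unitrN.
- by rewrite mul1r mul0r subr0 unitrN unitrM ua ux.
- by rewrite mul0r mulr1 opprK add0r.
- by rewrite mul0r mulr1 opprK add0r.
- by rewrite (_ : _ - _ = a * (1 - x)) ?unitrM ?ua //; ring.
Qed.

Lemma stdr_invariants (a x : A) : a \is a GRing.unit ->
  pref (stdr a x) = a /\ cratio (stdr a x) = x.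
Proof.
move=> ua; rewrite /pref /cratio /stdr !val_i0 !val_i1 !val_i2 !val_i3 /= !ddmk.
split.
- have -> : (1 * - a - 0 * 1) * (1 * - a - 0 * 0) = a * a by ring.
  have -> : 0 * - a - - a * 1 = a by ring.
  exact: mulrK.
- have -> : (1 * - (a * x) - 0 * 1) * (0 * - a - - a * 1) = x * - (a * a) by ring.
  have -> : (0 * - (a * x) - - a * 1) * (1 * - a - 0 * 1) = - (a * a) by ring.
  by rewrite mulrK // unitrN unitrM ua.
Qed.

End Invariants.

Section UnitArith.
Variable A : comUnitRingType.
Implicit Types a b c d n r u v : A.

Lemma unit_eq a b : b \is a GRing.unit -> a = b -> a \is a GRing.unit.
Proof. by move=> ? ->. Qed.

Lemma div_eq n d r : d \is a GRing.unit -> n = r * d -> n / d = r.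
Proof. by move=> ud ->; rewrite mulrK. Qed.

Lemma cross_mul n d n' d' : d \is a GRing.unit -> d' \is a GRing.unit ->
  n * d' = n' * d -> n / d = n' / d'.
Proof. by move=> ud ud' e; rewrite -(mulrK ud' n) e mulrAC mulrK. Qed.

Lemma mul_sq_ratio a u v : u \is a GRing.unit -> v \is a GRing.unit ->
  a * (u / v) * (v / u) ^+ 2 = a * v / u.
Proof.
move=> uu uv; have h1 := mulrV uu; have h2 := mulrV uv.
move: (u^-1) (v^-1) h1 h2 => ui vi h1 h2; ring: h1 h2.
Qed.

Lemma invr_sub1 u : u \is a GRing.unit -> u^-1 - 1 = (1 - u) / u.
Proof. by move=> uu; rewrite mulrBl mul1r mulrV. Qed.

Lemma sub1_invr u : u \is a GRing.unit -> 1 - u^-1 = (u - 1) / u.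
Proof. by move=> uu; rewrite mulrBl mul1r mulrV. Qed.

Lemma divr_div a b c d : b \is a GRing.unit -> c \is a GRing.unit -> d \is a GRing.unit ->
  (a / b) / (c / d) = (a * d) / (b * c).
Proof.
move=> ub uc ud; rewrite invrM ?unitrV // invrK invrM //.
have h1 := mulrV ub; have h2 := mulrV uc; have h3 := mulrV ud.
move: (b^-1) (c^-1) h1 h2 h3 => bi ci h1 h2 h3; ring.
Qed.

End UnitArith.

(* The invariants of
   the faces are, up to squares in the prefactor, exactly the five terms of
   the five-term relation; this computation drives both directions. *)
Section FivePoints.
Variable A : comUnitRingType.
Variables g x y : A.

Definition std5_rows : seq (row2 A) :=
  [:: mkr 1 0; mkr 0 (- g); mkr 1 (- g); mkr 1 (- (g * x)); mkr 1 (- (g * y))].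

Definition std5 (k : 'I_5) : row2 A := nth 0 std5_rows k.

(* The face obtained by deleting row i; for i : 'I_5, face i k = std5 (lift i k). *)
Definition face (i : nat) (k : 'I_4) : row2 A := nth 0 std5_rows (bump i k).

(* The generator <a>[z] of the five-term relation matched with face i. *)
Definition face_gen (i : nat) : A * A :=
  nth (0, 0) [:: (g * (1 - x), (1 - x) / (1 - y));
                 (g * (x^-1 - 1), (1 - x^-1) / (1 - y^-1));
                 (g * x, y / x); (g, y); (g, x)] i.

Let o5 (k : nat) (hk : (k < 5)%N) : 'I_5 := Ordinal hk.

Lemma std5_units : generic std5 -> [/\ g \is a GRing.unit, inW x, inW y & inW (y / x)].
Proof.
move=> hg.
have h12 := hg (o5 (isT : (1 < 5)%N)) (o5 (isT : (2 < 5)%N)) isT.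
have h03 := hg (o5 (isT : (0 < 5)%N)) (o5 (isT : (3 < 5)%N)) isT.
have h04 := hg (o5 (isT : (0 < 5)%N)) (o5 (isT : (4 < 5)%N)) isT.
have h23 := hg (o5 (isT : (2 < 5)%N)) (o5 (isT : (3 < 5)%N)) isT.
have h24 := hg (o5 (isT : (2 < 5)%N)) (o5 (isT : (4 < 5)%N)) isT.
have h34 := hg (o5 (isT : (3 < 5)%N)) (o5 (isT : (4 < 5)%N)) isT.
rewrite /std5 /= !ddmk in h12 h03 h04 h23 h24 h34.
have ug : g \is a GRing.unit by apply: unit_eq h12 _; ring.
have ux : x \is a GRing.unit.
  by move: h03; rewrite (_ : _ - _ = - (g * x)) ?unitrN ?unitrM ?ug //; ring.
have uy : y \is a GRing.unit.
  by move: h04; rewrite (_ : _ - _ = - (g * y)) ?unitrN ?unitrM ?ug //; ring.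
have u1x : 1 - x \is a GRing.unit.
  by move: h23; rewrite (_ : _ - _ = g * (1 - x)) ?unitrM ?ug //; ring.
have u1y : 1 - y \is a GRing.unit.
  by move: h24; rewrite (_ : _ - _ = g * (1 - y)) ?unitrM ?ug //; ring.
have uxy : x - y \is a GRing.unit.
  by move: h34; rewrite (_ : _ - _ = g * (x - y)) ?unitrM ?ug //; ring.
split => //; rewrite /inW ?ux ?uy ?u1x ?u1y //.
rewrite unitrM uy unitrV ux /= (_ : 1 - y / x = (x - y) / x) ?unitrM ?uxy ?unitrV ?ux //.
by rewrite mulrBl mulrV.
Qed.

Lemma generic_std5 : g \is a GRing.unit -> inW x -> inW y -> inW (y / x) -> generic std5.
Proof.
move=> ug /andP [ux u1x] /andP [uy u1y] /andP [_ u1yx].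
have uxy : x - y \is a GRing.unit.
  rewrite (_ : x - y = x * (1 - y / x)) ?unitrM ?ux //.
  by rewrite mulrBr mulr1 mulrCA mulrV // mulr1.
apply: generic_lt.
case=> [[|[|[|[|[|m]]]]] hi] // [[|[|[|[|[|m']]]]] hj] //= _; rewrite /std5 /= ddmk.
- by apply: (unit_eq (b := - g)); [rewrite unitrN | ring].
- by apply: (unit_eq (b := - g)); [rewrite unitrN | ring].
- by apply: (unit_eq (b := - (g * x))); [rewrite unitrN unitrM ug | ring].
- by apply: (unit_eq (b := - (g * y))); [rewrite unitrN unitrM ug | ring].
- by apply: (unit_eq (b := g)); [ | ring].
- by apply: (unit_eq (b := g)); [ | ring].
- by apply: (unit_eq (b := g)); [ | ring].
- by apply: (unit_eq (b := g * (1 - x))); [rewrite unitrM ug | ring].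
- by apply: (unit_eq (b := g * (1 - y))); [rewrite unitrM ug | ring].
- by apply: (unit_eq (b := g * (x - y))); [rewrite unitrM ug | ring].
Qed.

Hypothesis ug : g \is a GRing.unit.
Hypothesis ux : x \is a GRing.unit.
Hypothesis uy : y \is a GRing.unit.
Hypothesis u1x : 1 - x \is a GRing.unit.
Hypothesis u1y : 1 - y \is a GRing.unit.

Local Ltac face_simpl := rewrite /pref /cratio /face !val_i0 !val_i1 !val_i2 ?val_i3 /= !ddmk.

Lemma face4_invariants : pref (face 4) = g /\ cratio (face 4) = x.
Proof.
have hg := mulrV ug; face_simpl; split; apply: div_eq.
- by apply: (unit_eq ug); ring.
- ring: hg.
- by apply: (unit_eq (b := - (g * g))); [rewrite unitrN unitrM ug | ring].
- ring: hg.
Qed.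

Lemma face3_invariants : pref (face 3) = g /\ cratio (face 3) = y.
Proof.
have hg := mulrV ug; face_simpl; split; apply: div_eq.
- by apply: (unit_eq ug); ring.
- ring: hg.
- by apply: (unit_eq (b := - (g * g))); [rewrite unitrN unitrM ug | ring].
- ring: hg.
Qed.

Lemma face2_invariants : pref (face 2) = g * x /\ cratio (face 2) = y / x.
Proof.
have hg := mulrV ug; have hx := mulrV ux; face_simpl; split; apply: div_eq.
- by apply: (unit_eq ug); ring.
- ring: hg.
- by apply: (unit_eq (b := - (g * g * x))); [rewrite unitrN !unitrM ug ux | ring].
- ring: hg hx.
Qed.

Lemma face1_invariants :
  pref (face 1) = g * (x^-1 - 1) * (x / (1 - x)) ^+ 2 /\
  cratio (face 1) = (1 - x^-1) / (1 - y^-1).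
Proof.
have uy1 : y - 1 \is a GRing.unit by apply: (unit_eq (b := - (1 - y))); [rewrite unitrN | ring].
have ux1 : x - 1 \is a GRing.unit by apply: (unit_eq (b := - (1 - x))); [rewrite unitrN | ring].
rewrite invr_sub1 // mul_sq_ratio // !sub1_invr // divr_div //.
face_simpl; split; apply: cross_mul => //.
- by apply: (unit_eq (b := g * (1 - x))); [rewrite unitrM ug u1x | ring].
- ring.
- by apply: (unit_eq (b := - (g * g * x * (1 - y)))); [rewrite unitrN !unitrM ug ux u1y | ring].
- by rewrite unitrM ux uy1.
- ring.
Qed.

Lemma face0_invariants :
  pref (face 0) = g * (1 - x) * (1 - x)^-1 ^+ 2 /\ cratio (face 0) = (1 - x) / (1 - y).
Proof.
rewrite expr2 mulrA mulrK //; face_simpl; split; apply: cross_mul => //.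
- by apply: (unit_eq (b := g * (1 - x))); [rewrite unitrM ug u1x | ring].
- ring.
- by apply: (unit_eq (b := g * g * (1 - y))); [rewrite !unitrM ug u1y | ring].
- ring.
Qed.

Lemma face_invariants (i : 'I_5) : exists2 w : A, w \is a GRing.unit &
  pref (face i) = (face_gen i).1 * w ^+ 2 /\ cratio (face i) = (face_gen i).2.
Proof.
case: i => [[|[|[|[|[|m]]]]] hi] //=.
- by exists (1 - x)^-1; [rewrite unitrV | exact: face0_invariants].
- by exists (x / (1 - x)); [rewrite unitrM ux unitrV | exact: face1_invariants].
- by exists 1; rewrite ?unitr1 // expr1n mulr1; exact: face2_invariants.
- by exists 1; rewrite ?unitr1 // expr1n mulr1; exact: face3_invariants.
- by exists 1; rewrite ?unitr1 // expr1n mulr1; exact: face4_invariants.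
Qed.

End FivePoints.

Section FiveTermFaces.
Variable A : comUnitRingType.
Variables g x y : A.

Lemma enum_ord5 : enum 'I_5 = [:: @Ordinal 5 0 isT; @Ordinal 5 1 isT;
  @Ordinal 5 2 isT; @Ordinal 5 3 isT; @Ordinal 5 4 isT].
Proof. by apply: (inj_map val_inj); rewrite val_enum_ord. Qed.

Lemma rp_five_faces :
  fsum [:: rpgen g x; FNeg (rpgen g y); rpgen (g * x) (y / x);
           FNeg (rpgen (g * (x^-1 - 1)) ((1 - x^-1) / (1 - y^-1)));
           rpgen (g * (1 - x)) ((1 - x) / (1 - y))] =
  fsum (rev [seq signed (odd i) (rpgen (face_gen g x y i).1 (face_gen g x y i).2)
            | i : 'I_5 <- enum 'I_5]).
Proof. by rewrite enum_ord5. Qed.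

Lemma p_five_faces :
  fsum [:: pgen x; FNeg (pgen y); pgen (y / x);
           FNeg (pgen ((1 - x^-1) / (1 - y^-1))); pgen ((1 - x) / (1 - y))] =
  fsum (rev [seq signed (odd i) (pgen (face_gen g x y i).2) | i : 'I_5 <- enum 'I_5]).
Proof. by rewrite enum_ord5. Qed.

End FiveTermFaces.

Lemma fmap_alt_sum G H (phi : G -> fterm H) (I : Type) (b : I -> bool)
    (t : I -> fterm G) (l : seq I) :
  fmap phi (fsum [seq signed (b i) (t i) | i <- l]) =
  fsum [seq signed (b i) (fmap phi (t i)) | i <- l].
Proof. by elim: l => //= i l ->; rewrite fmap_signed. Qed.

Lemma fmap_rev_alt_sum G H (phi : G -> fterm H) (I : Type) (b : I -> bool)
    (t : I -> fterm G) (l : seq I) (R : fterm H -> Prop) :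
  pres_eq R (fmap phi (fsum (rev [seq signed (b i) (t i) | i <- l])))
            (fsum [seq signed (b i) (fmap phi (t i)) | i <- l]).
Proof.
rewrite fmap_fsum map_rev; apply: pe_trans (pe_fsum_rev _ _) _.
by rewrite -fmap_fsum fmap_alt_sum; apply: pe_refl.
Qed.

Section PhiWellDefined.
Variable A : comUnitRingType.
Local Notation RPe := (pres_eq (@RP_rel A)).
Local Notation Pe := (pres_eq (@P_rel A)).

Lemma rpgenE (a x : A) (H : (a \is a GRing.unit) && inW x) :
  rpgen a x = FGen (exist (fun p : A * A => (p.1 \is a GRing.unit) && inW p.2) (a, x) H).
Proof. by rewrite /rpgen insubT. Qed.

Lemma pgenE (x : A) (H : inW x) : pgen x = FGen (exist (fun x => inW x) x H).
Proof. by rewrite /pgen insubT. Qed.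

Lemma phiRP_class (f : Xt A 4) (c w z : A) : w \is a GRing.unit ->
  pref (sval f) = c * w ^+ 2 -> cratio (sval f) = z -> RPe (phiRP f) (rpgen c z).
Proof.
move=> uw ep ez; have /andP [up hz] := phi_mem f.
rewrite phiRPE ep ez in up hz *.
have uc : c \is a GRing.unit by move: up; rewrite unitrM => /andP [].
by apply: pe_sym; apply: pe_sub0; apply: pe_rel; apply: rp_sq.
Qed.

Lemma invariants_SL2 h h' (l : 'I_4 -> A) (M : 'M[A]_2) :
  generic h -> (forall k, l k \is a GRing.unit) -> \det M = 1 ->
  (forall k, h' k = l k *: (h k *m M)) ->
  pref h = pref h' * (l i0)^-1 ^+ 2 /\ cratio h = cratio h'.
Proof.
move=> hg hl hM e; have uM : \det M \is a GRing.unit by rewrite hM unitr1.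
rewrite (pref_transform hg hl uM e) (cratio_transform hg hl uM e) hM mulr1.
by rewrite -mulrA -exprMn mulrV // expr1n mulr1.
Qed.

Lemma phiRP_SL2 (f g : Xt A 4) (l : 'I_4 -> A) (M : 'M[A]_2) :
  (forall k, l k \is a GRing.unit) -> \det M = 1 ->
  (forall k, sval g k = l k *: (sval f k *m M)) -> RPe (phiRP f) (phiRP g).
Proof.
move=> hl hM e; have [ep ec] := invariants_SL2 (genericX f) hl hM e.
by apply: phiRP_class ep ec; rewrite unitrV.
Qed.

Lemma phiP_GL2 (f g : Xt A 4) (l : 'I_4 -> A) (M : 'M[A]_2) :
  (forall k, l k \is a GRing.unit) -> \det M \is a GRing.unit ->
  (forall k, sval g k = l k *: (sval f k *m M)) -> phiP g = phiP f.
Proof. by move=> hl hM e; rewrite !phiPE (cratio_transform (genericX f) hl hM e). Qed.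

(* The R_A-structure: acting by M multiplies the prefactor by det M. *)
Lemma phiRP_act (f g : Xt A 4) (M : 'M[A]_2) : M \in unitmx ->
  (forall i, sval g i = sval f i *m M) -> RPe (phiRP g) (ract (\det M) (phiRP f)).
Proof.
move=> hM e; have uM : \det M \is a GRing.unit by rewrite -unitmxE.
have e1 k : sval g k = (fun=> 1) k *: (sval f k *m M) by rewrite scale1r e.
rewrite !phiRPE (pref_transform (genericX f) (fun=> unitr1 _) uM e1).
rewrite (cratio_transform (genericX f) (fun=> unitr1 _) uM e1).
by rewrite /ract (rpgenE (phi_mem f)) /= expr1n mulr1 mulrC; apply: pe_refl.
Qed.

(* The faces of a 5-configuration F, normalised by the first two rows. *)
Section Delta.
Variables (F : Xt A 5) (G : 'I_5 -> Xt A 4).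
Hypothesis eG : forall i k, sval (G i) k = sval F (lift i k).

Let h := sval F.
Let g := normT h (inord 2).
Let x := normT h (inord 3) / g.
Let y := normT h (inord 4) / g.

Lemma unit_g : g \is a GRing.unit.
Proof. by apply: (unit_normT (genericX F)); apply: o_neq. Qed.

Lemma std5_normRow k : std5 g x y k = normRow h k.
Proof.
case: k => [[|[|[|[|[|m]]]]] hk] //; rewrite /std5 /normRow /= ?ord_inord //.
- by rewrite /x mulrC divrK // unit_g.
- by rewrite /y mulrC divrK // unit_g.
Qed.

Lemma generic_std5_delta : generic (std5 g x y).
Proof.
apply: (generic_ext (h := normRow h)); first by move=> k; rewrite std5_normRow.
exact: generic_normRow (genericX F).
Qed.

Lemma face_transform (i : 'I_5) (k : 'I_4) :
  face g x y i k = normScale h (lift i k) *: (sval (G i) k *m normMx h).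
Proof. by rewrite eG -(normRowE (genericX F)) -std5_normRow. Qed.

Lemma face_invariants_delta (i : 'I_5) : exists2 w : A, w \is a GRing.unit &
  pref (sval (G i)) = (face_gen g x y i).1 * w ^+ 2 /\
  cratio (sval (G i)) = (face_gen g x y i).2.
Proof.
have [ug /andP [ux u1x] /andP [uy u1y] _] := std5_units generic_std5_delta.
have [w uw [ep ec]] := face_invariants ug ux uy u1x u1y i.
have hl k := unit_normScale (genericX F) (lift i k).
have [ep' ec'] :=
  invariants_SL2 (genericX (G i)) hl (det_normMx (genericX F)) (face_transform i).
exists (w * (normScale h (lift i i0))^-1); first by rewrite unitrM uw unitrV hl.
by rewrite ep' ec' ep ec -mulrA -exprMn.
Qed.

Lemma delta_RP :
  RPe (fmap (@phiRP A) (fsum [seq signed (odd i) (FGen (G i)) | i : 'I_5 <- enum 'I_5])) FZero.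
Proof.
have [ug hx hy hyx] := std5_units generic_std5_delta.
apply: pe_trans _ (pe_rel (rp_five ug hx hy hyx)); rewrite rp_five_faces.
apply: pe_trans _ (pe_sym (pe_fsum_rev _ _)); rewrite fmap_alt_sum.
apply: pe_fsum_signed => i /=.
have [w uw [ep ec]] := face_invariants_delta i.
exact: phiRP_class uw ep ec.
Qed.

Lemma delta_P :
  Pe (fmap (@phiP A) (fsum [seq signed (odd i) (FGen (G i)) | i : 'I_5 <- enum 'I_5])) FZero.
Proof.
have [ug hx hy hyx] := std5_units generic_std5_delta.
apply: pe_trans _ (pe_rel (p_five hx hy hyx)); rewrite (p_five_faces g).
apply: pe_trans _ (pe_sym (pe_fsum_rev _ _)); rewrite fmap_alt_sum.
apply: pe_fsum_signed => i /=.
have [w uw [_ ec]] := face_invariants_delta i.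
by rewrite phiPE ec; apply: pe_refl.
Qed.

End Delta.

Lemma rel_phiRP r : Pt_rel (@SL2 A) r -> RPe (fmap (@phiRP A) r) FZero.
Proof.
case=> [f g hex|F G eG|f g M hM e].
- have [l hl] := fin_all_exists hex; apply: pe_subr.
  apply: (phiRP_SL2 (l := l) (M := 1%:M)) => [k||k].
  + by case: (hl k).
  + exact: det1.
  + by rewrite mulmx1; case: (hl k).
- exact: delta_RP.
- apply: pe_subr; apply: (phiRP_SL2 (l := fun=> 1) (M := M)) => // k.
  + exact: unitr1.
  + by rewrite scale1r e.
Qed.

Lemma rel_phiP r : Pt_rel (@GL2 A) r -> Pe (fmap (@phiP A) r) FZero.
Proof.
case=> [f g hex|F G eG|f g M hM e].
- have [l hl] := fin_all_exists hex; apply: pe_subr => /=.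
  rewrite (@phiP_GL2 f g l 1%:M) => [|k||k].
  + exact: pe_refl.
  + by case: (hl k).
  + by rewrite det1 unitr1.
  + by rewrite mulmx1; case: (hl k).
- exact: delta_P.
- apply: pe_subr => /=; rewrite (@phiP_GL2 f g (fun=> 1) M) => [|k||k].
  + exact: pe_refl.
  + exact: unitr1.
  + by rewrite -unitmxE.
  + by rewrite scale1r e.
Qed.

End PhiWellDefined.

Section PsiWellDefined.
Variable A : comUnitRingType.
Local Notation PtS := (pres_eq (Pt_rel (@SL2 A))).
Local Notation PtG := (pres_eq (Pt_rel (@GL2 A))).

Definition stdX (a x : A) (H : (a \is a GRing.unit) && inW x) : Xt A 4 :=
  mkX (generic_stdr (andP H).1 (andP H).2).

Lemma stdX_sq (a w x : A) H H' : w \is a GRing.unit ->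
  PtS (FGen (@stdX a x H)) (FGen (@stdX (a * w ^+ 2) x H')).
Proof.
move=> uw; apply: (Pt_transform (M := dmx w^-1 w) (l := fun=> w)) => //.
- by rewrite /SL2 det_dmx mulVr.
- by rewrite det_dmx mulVr // unitr1.
- have h1 := mulVr uw; case=> [[|[|[|[|m]]]] hk] //=;
  rewrite /stdr /= mkr_dmx scale_mkr; apply: mkr_eq;
  move: (w^-1) h1 => wi h1; ring: h1.
Qed.

(* Over GL_2 the prefactor can be changed arbitrarily, via diag(1, b/a). *)
Lemma stdX_GL (a b x : A) H H' : PtG (FGen (@stdX a x H)) (FGen (@stdX b x H')).
Proof.
have ua := (andP H).1; have ub := (andP H').1.
apply: (Pt_transform (M := dmx 1 (b / a)) (l := fun=> 1)).
- by rewrite /GL2 unitmxE det_dmx mul1r unitrM ub unitrV.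
- by rewrite det_dmx mul1r unitrM ub unitrV.
- by move=> _; exact: unitr1.
- have h1 := mulVr ua; case=> [[|[|[|[|m]]]] hk] //=;
  rewrite /stdr /= mkr_dmx scale_mkr; apply: mkr_eq;
  move: (a^-1) h1 => ai h1; ring: h1.
Qed.

Lemma stdX_ext (a b x y : A) H H' (R : 'M[A]_2 -> Prop) : a = b -> x = y ->
  pres_eq (Pt_rel R) (FGen (@stdX a x H)) (FGen (@stdX b y H')).
Proof. by move=> eab exy; apply: Pt_ext => k /=; rewrite eab exy. Qed.

Lemma stdX_normal (f : Xt A 4) : PtS (FGen (stdX (phi_mem f))) (FGen f).
Proof.
have hf := genericX f.
apply: pe_sym; apply: (Pt_transform (M := normMx (sval f)) (l := normScale (sval f))).
- by rewrite /SL2 (det_normMx hf).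
- by rewrite (det_normMx hf) unitr1.
- exact: unit_normScale.
- by move=> k /=; rewrite stdr_normRow ?normRowE.
Qed.

Definition psiRP (p : RPgen A) : fterm (Xt A 4) := FGen (stdX (proj2_sig p)).

Lemma memP (x : A) : inW x -> ((1 : A) \is a GRing.unit) && inW x.
Proof. by rewrite unitr1. Qed.

Definition psiP (p : Pgen A) : fterm (Xt A 4) := FGen (stdX (memP (proj2_sig p))).

Lemma psiRP_class (f : Xt A 4) (c w z : A) : w \is a GRing.unit ->
  pref (sval f) = c * w ^+ 2 -> cratio (sval f) = z -> PtS (fmap psiRP (rpgen c z)) (FGen f).
Proof.
move=> uw ep ez; have /andP [up hz] := phi_mem f; rewrite ep ez in up hz.
have uc : c \is a GRing.unit by move: up; rewrite unitrM => /andP [].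
have H : (c \is a GRing.unit) && inW z by rewrite uc hz.
have H' : (c * w ^+ 2 \is a GRing.unit) && inW z by rewrite up hz.
rewrite (rpgenE H) /=; apply: pe_trans (stdX_sq H H' uw) _.
by apply: pe_trans _ (stdX_normal f); apply: stdX_ext.
Qed.

Lemma psiP_class (f : Xt A 4) (z : A) :
  cratio (sval f) = z -> PtG (fmap psiP (pgen z)) (FGen f).
Proof.
move=> <-; have /andP [_ hz] := phi_mem f.
by rewrite (pgenE hz) /=; apply: pe_trans (stdX_GL _ (phi_mem f)) (SL2_GL2 (stdX_normal f)).
Qed.

Lemma rel_psiRP r : RP_rel r -> PtS (fmap psiRP r) FZero.
Proof.
case=> [a w x ua uw hx|g x y ug hx hy hyx].
- have H : (a \is a GRing.unit) && inW x by rewrite ua hx.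
  have [ep ec] := stdr_invariants x ua.
  pose f := stdX H; have cf : cratio (sval f) = x := ec.
  have pf1 : pref (sval f) = a * 1 ^+ 2 by rewrite expr1n mulr1; exact: ep.
  have pfw : pref (sval f) = a * w ^+ 2 * w^-1 ^+ 2.
    by rewrite -mulrA -exprMn mulrV // expr1n mulr1; exact: ep.
  have uwi : w^-1 \is a GRing.unit by rewrite unitrV.
  apply: pe_subr.
  exact: pe_trans (psiRP_class (unitr1 A) pf1 cf) (pe_sym (psiRP_class uwi pfw cf)).
- have g5 := generic_std5 ug hx hy hyx.
  pose Gi (i : 'I_5) : Xt A 4 := mkX (generic_lift i g5).
  have hd := pe_rel (@pt_delta A (@SL2 A) (mkX g5) Gi (fun i k => erefl)).
  rewrite rp_five_faces; apply: pe_trans (fmap_rev_alt_sum _ _ _ _ _) (pe_trans _ hd).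
  apply: (@pe_fsum_signed _ _ _ _ _ (fun i => FGen (Gi i))) => i.
  have [/andP [ux u1x] /andP [uy u1y]] := (hx, hy).
  have [w uw [ep ec]] := face_invariants ug ux uy u1x u1y i.
  have ep' : pref (sval (Gi i)) = (face_gen g x y i).1 * w ^+ 2 := ep.
  have ec' : cratio (sval (Gi i)) = (face_gen g x y i).2 := ec.
  exact: psiRP_class uw ep' ec'.
Qed.

Lemma rel_psiP r : P_rel r -> PtG (fmap psiP r) FZero.
Proof.
case=> x y hx hy hyx.
have g5 := generic_std5 (unitr1 A) hx hy hyx.
pose Gi (i : 'I_5) : Xt A 4 := mkX (generic_lift i g5).
have hd := SL2_GL2 (pe_rel (@pt_delta A (@SL2 A) (mkX g5) Gi (fun i k => erefl))).
rewrite (p_five_faces 1); apply: pe_trans (fmap_rev_alt_sum _ _ _ _ _) (pe_trans _ hd).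
apply: (@pe_fsum_signed _ _ _ _ _ (fun i => FGen (Gi i))) => i.
have [/andP [ux u1x] /andP [uy u1y]] := (hx, hy).
have [w uw [_ ec]] := face_invariants (unitr1 A) ux uy u1x u1y i.
have ec' : cratio (sval (Gi i)) = (face_gen 1 x y i).2 := ec.
exact: psiP_class ec'.
Qed.

Lemma psiRP_phiRP (f : Xt A 4) : PtS (fmap psiRP (phiRP f)) (FGen f).
Proof. by rewrite phiRPE; apply: (psiRP_class (w := 1)); rewrite ?unitr1 ?expr1n ?mulr1. Qed.

Lemma psiP_phiP (f : Xt A 4) : PtG (fmap psiP (phiP f)) (FGen f).
Proof. by rewrite phiPE; apply: psiP_class. Qed.

(* phi hits every generator: phi(std(a, x)) = <a>[x]. *)
Lemma phiRP_onto (p : RPgen A) :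
  exists s, pres_eq (@RP_rel A) (fmap (@phiRP A) s) (FGen p).
Proof.
case: p => [[a x] H]; exists (FGen (stdX H)); rewrite /= phiRPE.
have [ep ec] := stdr_invariants x (andP H).1.
by rewrite [sval _]/= ep ec (rpgenE H); apply: pe_refl.
Qed.

Lemma phiP_onto (p : Pgen A) : exists s, pres_eq (@P_rel A) (fmap (@phiP A) s) (FGen p).
Proof.
case: p => [x H]; exists (FGen (stdX (memP H))); rewrite /= phiPE.
have [_ ec] := stdr_invariants x (unitr1 A).
by rewrite [sval _]/= ec (pgenE H); apply: pe_refl.
Qed.

End PsiWellDefined.

Theorem mainTheorem14 (A : comUnitRingType)
  (hA : exists a b c e : A, uniq [:: a; b; c; e]) :
  (* RP(A) ~= tilde P(A)_{SL_2(A)} via phiRP, as R_A-modules *)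
  ((forall s t : fterm (Xt A 4), pres_eq (Pt_rel (@SL2 A)) s t ->
       pres_eq (@RP_rel A) (fmap (@phiRP A) s) (fmap (@phiRP A) t)) /\
   (forall s t : fterm (Xt A 4),
       pres_eq (@RP_rel A) (fmap (@phiRP A) s) (fmap (@phiRP A) t) ->
       pres_eq (Pt_rel (@SL2 A)) s t) /\
   (forall r : fterm (RPgen A), exists s : fterm (Xt A 4),
       pres_eq (@RP_rel A) (fmap (@phiRP A) s) r) /\
   (forall (f g : Xt A 4) (M : 'M[A]_2), M \in unitmx ->
       (forall i, sval g i = sval f i *m M) ->
       pres_eq (@RP_rel A) (phiRP g) (ract (\det M) (phiRP f)))) /\
  (* P(A) ~= tilde P(A)_{GL_2(A)} via phiP, as abelian groups *)
  ((forall s t : fterm (Xt A 4), pres_eq (Pt_rel (@GL2 A)) s t ->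
       pres_eq (@P_rel A) (fmap (@phiP A) s) (fmap (@phiP A) t)) /\
   (forall s t : fterm (Xt A 4),
       pres_eq (@P_rel A) (fmap (@phiP A) s) (fmap (@phiP A) t) ->
       pres_eq (Pt_rel (@GL2 A)) s t) /\
   (forall r : fterm (Pgen A), exists s : fterm (Xt A 4),
       pres_eq (@P_rel A) (fmap (@phiP A) s) r)).
Proof.
split; split; [|split; [|split]| |split].
- exact: pe_hom (@rel_phiRP A).
- exact: pres_inj_of_retraction (@rel_psiRP A) (@psiRP_phiRP A).
- exact: pres_surj (@phiRP_onto A).
- exact: phiRP_act.
- exact: pe_hom (@rel_phiP A).
- exact: pres_inj_of_retraction (@rel_psiP A) (@psiP_phiP A).
- exact: pres_surj (@phiP_onto A).
Qed.
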